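(* Let $G$ be a cubic graph with $|V(G)|\ge 4$ and let $v\in V(G)$. If $G^v$ is a Klee-graph, then $G$ is a Klee-graph.
   Context: For a cubic graph $G$ and $v\in V(G)$ with neighbours $x_1,x_2,x_3$, $G^v$ denotes the cubic graph obtained by replacing $v$ by a triangle: delete $v$, add new vertices $v_1,v_2,v_3$, the edges $v_1v_2,v_2v_3,v_3v_1$, and the edges $v_ix_i$ for $i=1,2,3$. A graph is a Klee-graph if it is $K_4$, or it equals $H^w$ for some Klee-graph $H$ and some $w\in V(H)$. *)

(* Cubic (loopless multi)graphs given by an edge-multiplicity
   function m : T -> T -> nat on a finite vertex type T. *)
From mathcomp Require Import all_boot.
Set Implicit Arguments. Unset Strict Implicit. Unset Printing Implicit Defensive.

Definition mgraph (T : finType) := T -> T -> nat.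

Definition cubic (T : finType) (m : mgraph T) : Prop :=
  [/\ forall x y, m x y = m y x, forall x, m x x = 0
    & forall x, \sum_(y : T) m x y = 3].

(* xs = (x_1, x_2, x_3) lists the neighbours of v with multiplicity *)
Definition nbrs (T : finType) (m : mgraph T) (v : T) (xs : 3.-tuple T) : Prop :=
  forall u, m v u = count_mem u xs.

(* vertex set of G^v : V(G) - v plus three new vertices v_1, v_2, v_3 *)
Definition Vexp (T : finType) (v : T) : finType :=
  ({x : T | x != v} + 'I_3)%type.

(* G^v : delete v, add triangle v_1 v_2 v_3 and edges v_i x_i *)
Definition expand (T : finType) (m : mgraph T) (v : T) (xs : 3.-tuple T)
  : mgraph (Vexp v) :=
  fun a b => match a, b with
  | inl x, inl y => m (val x) (val y)
  | inl x, inr i => nat_of_bool (val x == tnth xs i)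
  | inr i, inl y => nat_of_bool (tnth xs i == val y)
  | inr i, inr j => nat_of_bool (i != j)
  end.

Definition giso (T1 T2 : finType) (m1 : mgraph T1) (m2 : mgraph T2) : Prop :=
  exists f : T1 -> T2, bijective f /\ forall a b, m2 (f a) (f b) = m1 a b.

Definition K4 : mgraph 'I_4 := fun i j => nat_of_bool (i != j).

Arguments expand [T] m v xs _ _.

Inductive klee : forall T : finType, mgraph T -> Prop :=
| klee_K4 (T : finType) (m : mgraph T) : giso K4 m -> @klee T m
| klee_exp (T : finType) (m : mgraph T) (H : finType) (mH : mgraph H)
    (w : H) (xs : 3.-tuple H) :
    @klee H mH -> nbrs mH w xs -> giso (expand mH w xs) m -> @klee T m.

(* Induction on a derivation of G^v as a Klee-graph.  If G^v is isomorphic to H^w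
   with H a Klee-graph, the isomorphism maps the triangle that replaced v onto a
   triangle of H^w, and a triangle of H^w cannot mix old and new vertices.  If it is
   the triangle that replaced w, then G is isomorphic to H.  Otherwise it is a
   triangle t of H not containing w, and G is obtained from H by contracting t to a
   vertex c and then expanding w.  The contraction H/t satisfies (H/t)^c = H, so by
   induction it is a Klee-graph as soon as it has four vertices, and then so is
   G = (H/t)^w.  In the remaining case G has four vertices and is simple, hence K4. *)

From mathcomp Require Import all_boot zify.
Set Implicit Arguments. Unset Strict Implicit. Unset Printing Implicit Defensive.

Definition simpleg (T : finType) (m : mgraph T) := forall x y, m x y <= 1.

Lemma giso_refl (T : finType) (m : mgraph T) : giso m m.
Proof. by exists id; split => //; exists id. Qed.

Lemma giso_sym (T1 T2 : finType) (m1 : mgraph T1) (m2 : mgraph T2) :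
  giso m1 m2 -> giso m2 m1.
Proof.
case=> f [[g fK gK] Hf]; exists g; split; first by exists f.
by move=> a b; rewrite -Hf !gK.
Qed.

Lemma giso_trans (T1 T2 T3 : finType) (m1 : mgraph T1) (m2 : mgraph T2)
    (m3 : mgraph T3) :
  giso m1 m2 -> giso m2 m3 -> giso m1 m3.
Proof.
case=> f [bf Hf] [g [bg Hg]]; exists (g \o f); split; first exact: bij_comp.
by move=> a b /=; rewrite Hg Hf.
Qed.

Lemma giso_card (T1 T2 : finType) (m1 : mgraph T1) (m2 : mgraph T2) :
  giso m1 m2 -> #|T1| = #|T2|.
Proof. by case=> f [bf _]; apply: bij_eq_card bf. Qed.

Lemma giso_cubic (T1 T2 : finType) (m1 : mgraph T1) (m2 : mgraph T2) :
  giso m1 m2 -> cubic m2 -> cubic m1.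
Proof.
case=> f [bf Hf] [Hs Hl Hd]; split.
- by move=> x y; rewrite -!Hf Hs.
- by move=> x; rewrite -Hf Hl.
- move=> x; rewrite -(Hd (f x)) (reindex f) /=; last exact: onW_bij.
  by apply: eq_bigr => y _; rewrite Hf.
Qed.

Lemma giso_simple (T1 T2 : finType) (m1 : mgraph T1) (m2 : mgraph T2) :
  giso m1 m2 -> simpleg m2 -> simpleg m1.
Proof. by case=> f [_ Hf] Hs x y; rewrite -Hf. Qed.

Lemma klee_giso (T1 T2 : finType) (m1 : mgraph T1) (m2 : mgraph T2) :
  klee m1 -> giso m1 m2 -> klee m2.
Proof.
case=> {T1 m1} [T m Hi | T m H mH w xs Hk Hn Hi] Hi2.
- by apply: klee_K4; apply: giso_trans Hi Hi2.
- by apply: (klee_exp Hk Hn); apply: giso_trans Hi Hi2.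
Qed.

Lemma count_mem3 (T : eqType) (xs : 3.-tuple T) (u : T) :
  count_mem u xs = \sum_(i < 3) (tnth xs i == u).
Proof.
case: xs => [[|a [|b [|c []]]] //] Hs.
by rewrite !big_ord_recl big_ord0 /= addn0 !(tnth_nth a) /=.
Qed.

Lemma sum_neq3 (i : 'I_3) : \sum_(j < 3) (i != j) = 2.
Proof. by rewrite !big_ord_recl big_ord0; case: i => [[|[|[|]]]]. Qed.

Lemma sum_eq1 (T : finType) (a : T) : \sum_y (a == y) = 1.
Proof. by rewrite (bigD1 a) //= eqxx big1 // => y /negbTE; rewrite eq_sym => ->. Qed.

Lemma sum1_unique (U : finType) (P : pred U) (F : U -> nat) :
  \sum_(y | P y) F y = 1 -> exists y, P y /\ forall z, P z -> F z = (z == y).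
Proof.
move=> HS; case: (pickP [pred y | P y && (0 < F y)]) => [y /andP [Py Fy] | none].
- exists y; split => // z Pz.
  move: HS; rewrite (bigD1 y) //= => HS.
  have Hy1 : F y = 1 by move: HS Fy; case: (F y) => [|[|n]] //; rewrite addSn.
  move: HS; rewrite Hy1 add1n => -[] /eqP; rewrite sum_nat_eq0 => /forallP Hall.
  have [->|Hzy] := eqVneq z y; first by rewrite ?eqxx Hy1.
  by have := Hall z; rewrite Pz Hzy /= => /eqP ->.
- move: HS; rewrite big1 // => y Py; have := none y; rewrite /= Py /=.
  by case: (F y).
Qed.

Lemma card_Vexp (T : finType) (v : T) : #|Vexp v| = #|T|.+2.
Proof.
have : 0 < #|T| by apply/card_gt0P; exists v.
rewrite card_sum card_ord card_sig cardC1 /=.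
by case: #|T| => [|n] // _; rewrite addnC.
Qed.

Lemma big_Vexp (T : finType) (v : T) (F : Vexp v -> nat) :
  \sum_(a : Vexp v) F a =
  \sum_(x : {x : T | x != v}) F (inl x) + \sum_(i < 3) F (inr i).
Proof. by rewrite (big_sumType _ xpredT). Qed.

Lemma eqVval (T : finType) (v a : T) :
  a = v \/ exists a' : {x : T | x != v}, a = val a'.
Proof. by case: (eqVneq a v) => [->|H]; [left | right; exists (exist _ a H)]. Qed.

Lemma big_sig_neq (T : finType) (v : T) (F : T -> nat) :
  \sum_(x : {x : T | x != v}) F (val x) = \sum_(x | x != v) F x.
Proof. by rewrite (big_sub (fun x => x != v)). Qed.

Lemma insub_eqSome (T : eqType) (P : pred T) (sT : subEqType P) (x : T) (u : sT) :
  (insub x == Some u) = (x == val u).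
Proof.
case: insubP => [u' _ <-|nPx] /=; first by rewrite (inj_eq val_inj).
by apply/esym/eqP => E; move: nPx; rewrite E valP.
Qed.

Lemma insub_eqNone (T : eqType) (P : pred T) (sT : subEqType P) (x : T) :
  (insub x == None :> option sT) = ~~ P x.
Proof. by case: insubP => [u Px _|nPx] /=; rewrite ?Px ?(negbTE nPx). Qed.

Lemma nbrs_neq (T : finType) (m : mgraph T) v xs :
  m v v = 0 -> nbrs m v xs -> forall i, tnth xs i != v.
Proof.
move=> Hl Hn i; apply/eqP => E.
have : v \in tval xs by rewrite -E mem_tnth.
by rewrite -has_pred1 has_count -Hn Hl.
Qed.

Lemma nbrs_inj (T : finType) (m : mgraph T) v xs :
  simpleg m -> nbrs m v xs -> injective (tnth xs).
Proof.
move=> Hs Hn i j E; apply/eqP; apply: contraT => Hij.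
have := Hs v (tnth xs i); rewrite Hn count_mem3 (bigD1 i) // (bigD1 j) /=.
  by rewrite eqxx E eqxx.
by rewrite eq_sym.
Qed.

Lemma expand_sym (T : finType) (m : mgraph T) v xs :
  (forall x y, m x y = m y x) -> forall a b, expand m v xs a b = expand m v xs b a.
Proof. by move=> Hs [x|i] [y|j] /=; rewrite 1?Hs // eq_sym. Qed.

Lemma expand_cubic (T : finType) (m : mgraph T) v xs :
  cubic m -> nbrs m v xs -> cubic (expand m v xs).
Proof.
case=> Hs Hl Hd Hn; split; first exact: expand_sym.
  by case=> [x|i] /=; rewrite ?Hl ?eqxx.
case=> [x|i]; rewrite big_Vexp /=.
- rewrite (big_sig_neq v (m (val x))) -[RHS](Hd (val x)) [in RHS](bigD1 v) //=.
  rewrite addnC; congr (_ + _).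
  by rewrite Hs Hn count_mem3; apply: eq_bigr => i _; rewrite eq_sym.
- rewrite (big_sig_neq v (fun y => tnth xs i == y)) sum_neq3.
  rewrite (bigD1 (tnth xs i)) ?(nbrs_neq (Hl v) Hn) //= eqxx big1 // => y /andP [_ H].
  by rewrite eq_sym (negbTE H).
Qed.

Lemma cubic_of_expand (T : finType) (m : mgraph T) v xs :
  (forall x y, m x y = m y x) -> (forall x, m x x = 0) -> nbrs m v xs ->
  cubic (expand m v xs) -> cubic m.
Proof.
move=> Hs Hl Hn [_ _ Hd]; split => // x.
case: (eqVval v x) => [->|[x' ->]].
- under eq_bigr => y _ do rewrite Hn count_mem3.
  rewrite exchange_big /=.
  under eq_bigr => i _ do rewrite sum_eq1.
  by rewrite sum_nat_const card_ord.
- rewrite -(Hd (inl x')) big_Vexp /= (big_sig_neq v (m (val x'))).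
  rewrite (bigD1 v) //= addnC; congr (_ + _).
  by rewrite Hs Hn count_mem3; apply: eq_bigr => i _; rewrite eq_sym.
Qed.

Lemma expand_simple (T : finType) (m : mgraph T) v xs :
  (forall x y, x != v -> y != v -> m x y <= 1) -> simpleg (expand m v xs).
Proof. by move=> Hs [x|i] [y|j] /=; rewrite ?Hs ?leq_b1 ?(valP x) ?(valP y). Qed.

Lemma K4_cubic : cubic K4.
Proof.
split=> [x y|x|x]; rewrite /K4; first by rewrite eq_sym.
  by rewrite eqxx.
by rewrite !big_ord_recl big_ord0; case: x => [[|[|[|[|]]]]].
Qed.

Lemma klee_cubic_simple (T : finType) (m : mgraph T) :
  klee m -> cubic m /\ simpleg m.
Proof.
have simple_K4 : simpleg K4 by move=> x y; apply: leq_b1.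
elim=> {T m} [T m Hi | T m H mH w xs _ [Hc Hs] Hn Hi]; have Hi' := giso_sym Hi.
- by split; [apply: giso_cubic Hi' K4_cubic | apply: giso_simple Hi' simple_K4].
- split; first exact: giso_cubic Hi' (expand_cubic Hc Hn).
  by apply: giso_simple Hi' _; apply: expand_simple => x y _ _; apply: Hs.
Qed.

Lemma cubic_simple_K4 (T : finType) (m : mgraph T) :
  cubic m -> simpleg m -> #|T| = 4 -> giso K4 m.
Proof.
move=> [_ Hl Hd] Hs H4.
have Em x y : m x y = (x != y).
  have le_m z : m x z <= (x != z) by case: eqP => [<-|_]; rewrite ?Hl ?Hs.
  have sum_neq : \sum_z (x != z) = 3.
    rewrite (bigD1 x) //= eqxx add0n (eq_bigr (fun=> 1)); last first.
      by move=> z; rewrite eq_sym => ->.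
    by rewrite sum1_card cardC1 H4.
  have /eqP := @sumnB _ (index_enum T) xpredT _ _ (fun z _ => le_m z).
  rewrite sum_neq Hd subnn sum_nat_eq0 => /forallP/(_ y)/implyP/(_ isT).
  by rewrite subn_eq0 => ge_m; apply/eqP; rewrite eqn_leq le_m ge_m.
have bij_f : bijective (enum_val \o cast_ord (esym H4)).
  apply: bij_comp; first exact: enum_val_bij.
  exact: Bijective (cast_ordKV H4) (cast_ordK H4).
by exists (enum_val \o cast_ord (esym H4)); split => // a b; rewrite Em (bij_eq bij_f).
Qed.

Lemma cubic_handshake (T : finType) (m : mgraph T) :
  cubic m -> exists k, #|T| * 3 = k.*2.
Proof.
case=> Hs Hl Hd; pose r := @enum_rank T.
exists (\sum_x \sum_y (if r x < r y then m x y else 0)).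
have split_m x y :
    m x y = (if r x < r y then m x y else 0) + (if r y < r x then m y x else 0).
  case: (ltngtP (r x) (r y)) => H; rewrite ?addn0 ?add0n 1?Hs //.
  by rewrite (enum_rank_inj (val_inj H)) Hl.
rewrite -sum_nat_const.
transitivity (\sum_x \sum_y m x y); first by apply: eq_bigr => x _; rewrite Hd.
rewrite -addnn.
under eq_bigr => x _ do (under eq_bigr => y _ do rewrite split_m; rewrite big_split).
by rewrite big_split /= [X in _ + X]exchange_big.
Qed.

Lemma third_index (i j : 'I_3) : i != j -> exists k : 'I_3, (k != i) && (k != j).
Proof.
case: i => [[|[|[|//]]] Hi]; case: j => [[|[|[|//]]] Hj] // _;
  first [by exists ord0 | by exists (@Ordinal 3 1 isT) | by exists ord_max].
Qed.

(* A triangle of G^w cannot mix new and old vertices: a new vertex has only one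
   old neighbour, and two new vertices have distinct old neighbours. *)
Lemma expand_triangle (H : finType) (mH : mgraph H) w ys (p : 'I_3 -> Vexp w) :
  injective (tnth ys) -> injective p ->
  (forall i j, expand mH w ys (p i) (p j) = (i != j)) ->
  (forall i, exists j, p i = inr j) \/ (forall i, exists y, p i = inl y).
Proof.
move=> ys_inj p_inj Hp.
suff mixed i j a y : p i = inr a -> p j = inl y -> False.
  case E0: (p ord0) => [y|a]; [right | left] => i; case Ei: (p i) => [z|b];
    by [exists z | exists b | case: (mixed _ _ _ _ Ei E0) | case: (mixed _ _ _ _ E0 Ei)].
move=> Ei Ej.
have Hij : i != j by apply: contraTneq isT => E; move: Ei; rewrite E Ej.
have := Hp i j; rewrite Ei Ej /= Hij; case: eqP => // Hay _.
have [k /andP [Hki Hkj]] := third_index Hij.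
case Ek: (p k) => [z|b].
- have := Hp i k; rewrite Ei Ek /= [i == k]eq_sym Hki; case: eqP => // Haz _.
  have Ezy : z = y by apply: val_inj; exact: etrans (esym Haz) Hay.
  by move: Hkj; rewrite -(inj_eq p_inj) Ek Ej Ezy eqxx.
- have := Hp k j; rewrite Ek Ej /= Hkj; case: eqP => // Hby _.
  have Eba : b = a by apply: ys_inj; rewrite Hby.
  by move: Hki; rewrite -(inj_eq p_inj) Ek Ei Eba eqxx.
Qed.

(* The contraction G/t of a triangle t: the vertices of t become the vertex [None]. *)
Definition Vcontr (U : finType) (bs : seq U) : finType := option {x : U | x \notin bs}.

Definition contract (U : finType) (K : mgraph U) (bs : 3.-tuple U) : mgraph (Vcontr bs) :=
  fun a b => match a, b with
  | Some x, Some y => K (val x) (val y)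
  | None, Some y | Some y, None => \sum_(i < 3) K (tnth bs i) (val y)
  | None, None => 0
  end.
Arguments contract [U] K bs _ _ : simpl never.

Lemma contract_sym (U : finType) (K : mgraph U) bs :
  (forall x y, K x y = K y x) -> forall a b, contract K bs a b = contract K bs b a.
Proof. by move=> Hs [x|] [y|]; rewrite /contract // Hs. Qed.

Lemma contract_loop (U : finType) (K : mgraph U) bs :
  (forall x, K x x = 0) -> forall a, contract K bs a a = 0.
Proof. by move=> Hl [x|]; rewrite /contract ?Hl. Qed.

Section Contraction.
Variables (U : finType) (K : mgraph U) (bs : 3.-tuple U).
Hypotheses (cubicK : cubic K) (triK : forall i j, K (tnth bs i) (tnth bs j) = (i != j)).

Lemma triangle_inj : injective (tnth bs).
Proof.
move=> i j E; apply/eqP; apply: contraT => Hij.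
by have := triK i j; rewrite E Hij; case: cubicK => _ ->.
Qed.

Lemma triangle_uniq : uniq bs.
Proof.
by rewrite -(map_tnth_enum bs) map_inj_uniq ?enum_uniq //; apply: triangle_inj.
Qed.

Lemma card_Vcontr : #|Vcontr bs|.+2 = #|U|.
Proof.
rewrite card_option card_sig.
have := cardC [pred x | x \in bs]; rewrite (card_uniqP triangle_uniq) size_tuple.
by move=> <-; rewrite add3n; congr _.+3; apply: eq_card => x; rewrite !inE.
Qed.

Lemma triangle_out_deg i : \sum_(y | y \notin bs) K (tnth bs i) y = 1.
Proof.
case: cubicK => _ _ Hd; have := Hd (tnth bs i); rewrite (bigID (mem bs)) /=.
have -> : \sum_(y in bs) K (tnth bs i) y = 2.
  rewrite -(big_uniq _ triangle_uniq) (big_tuple _ _ bs xpredT (K (tnth bs i))).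
  by under eq_bigr => j _ do rewrite triK; rewrite sum_neq3.
by move/(@addnI 2).
Qed.

Definition out_nbr i :=
  odflt (tnth bs i) [pick y | (y \notin bs) && (K (tnth bs i) y == 1)].

Lemma out_nbr_spec i :
  out_nbr i \notin bs /\ forall y, y \notin bs -> K (tnth bs i) y = (y == out_nbr i).
Proof.
have [y [Py Hy]] := sum1_unique (triangle_out_deg i).
suff -> : out_nbr i = y by [].
rewrite /out_nbr; case: pickP => [z /andP [Pz /eqP Hz] | none] /=.
- by move: Hz; rewrite Hy //; case: eqP.
- by have := none y; rewrite /= Py Hy // eqxx.
Qed.

Definition out_tuple : 3.-tuple (Vcontr bs) := [tuple insub (out_nbr i) | i < 3].

Lemma nbrs_contract : nbrs (contract K bs) None out_tuple.
Proof.
move=> u; rewrite count_mem3; under eq_bigr => i _ do rewrite tnth_mktuple.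
have [Hout Hnbr] := (fun i => (out_nbr_spec i).1, fun i => (out_nbr_spec i).2).
case: u => [y|] /=.
- by apply: eq_bigr => i _; rewrite Hnbr ?(valP y) // insub_eqSome eq_sym.
- by rewrite big1 // => i _; case: insubP => [u _ _|/negP[]] //; apply: Hout.
Qed.

Definition uncontract (a : Vexp (None : Vcontr bs)) : U :=
  match a with
  | inl x => if val x is Some y then val y else tnth bs ord0
  | inr i => tnth bs i
  end.

Lemma uncontract_edge a b :
  K (uncontract a) (uncontract b) = expand (contract K bs) None out_tuple a b.
Proof.
case: cubicK => Hs _ _; have Hnbr i := (out_nbr_spec i).2.
case: a b => [[[x|] //= _]|i] [[[y|] //= _]|j] /=; rewrite ?triK // tnth_mktuple.
- by rewrite Hs Hnbr ?(valP x) // [in RHS]eq_sym insub_eqSome eq_sym.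
- by rewrite Hnbr ?(valP y) // insub_eqSome eq_sym.
Qed.

Lemma uncontract_bij : bijective uncontract.
Proof.
apply: inj_card_bij; last by rewrite card_Vexp card_Vcontr.
case=> [[[x|] Hx]|i] [[[y|] Hy]|j] //=.
- by move=> /val_inj E; congr inl; apply: val_inj; rewrite /= E.
- by move=> E; have := valP x; rewrite /= E mem_tnth.
- by move=> E; have := valP y; rewrite /= -E mem_tnth.
- by move/triangle_inj ->.
Qed.

Lemma expand_contract_giso : giso (expand (contract K bs) None out_tuple) K.
Proof. by exists uncontract; split; [apply: uncontract_bij | apply: uncontract_edge]. Qed.

Lemma contract_cubic : cubic (contract K bs).
Proof.
case: cubicK => Hs Hl _.
apply: cubic_of_expand (contract_sym Hs) (contract_loop Hl) nbrs_contract _.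
exact: giso_cubic expand_contract_giso cubicK.
Qed.

End Contraction.

(* [C] is [E] with the triangle [t] contracted to the vertex [c]; [q] maps the vertices
   of [E] off [t] to the other vertices of [C] (its values on [t] are irrelevant). *)
Record contraction_map (V W : finType) (E : mgraph V) (t : 'I_3 -> V)
    (C : mgraph W) (c : W) (q : V -> W) : Prop := ContractionMap {
  contraction_card : #|W|.+2 = #|V|;
  contraction_inj : forall x y, x \notin codom t -> y \notin codom t ->
    q x = q y -> x = y;
  contraction_neq : forall x, x \notin codom t -> q x != c;
  contraction_edge : forall x y, x \notin codom t -> y \notin codom t ->
    C (q x) (q y) = E x y;
  contraction_hub_edge : forall x, x \notin codom t -> C c (q x) = \sum_(i < 3) E (t i) x;
  contraction_hub_loop : C c c = 0
}.

Lemma contraction_map_perm (V W : finType) (E : mgraph V) t (C : mgraph W) c q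
    (p : 'I_3 -> 'I_3) :
  injective p -> contraction_map E t C c q -> contraction_map E (t \o p) C c q.
Proof.
move=> p_inj [Hcard Hinj Hneq Hedge Hhub Hloop].
have codom_tp x : (x \in codom (t \o p)) = (x \in codom t).
  apply/codomP/codomP => [[i ->]|[i ->]]; first by exists (p i).
  by have [p' pK p'K] := injF_bij p_inj; exists (p' i) => /=; rewrite p'K.
split=> // [x y|x|x y|x]; rewrite ?codom_tp; [exact: Hinj|exact: Hneq|exact: Hedge|].
by move=> Hx; rewrite Hhub // (reindex_inj p_inj).
Qed.

(* A graph is determined up to isomorphism by any of its expansions together with the
   triangle the expansion created. *)
Lemma contraction_giso (T V W : finType) (m : mgraph T) v xs (E : mgraph V)
    (C : mgraph W) (phi : Vexp v -> V) t c q :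
  cubic m -> nbrs m v xs -> (forall x y, C x y = C y x) ->
  bijective phi -> (forall a b, E (phi a) (phi b) = expand m v xs a b) ->
  (forall i, phi (inr i) = t i) -> contraction_map E t C c q -> giso m C.
Proof.
move=> [Hs Hl _] Hn HsC bphi Hphi Ht [Hcard Hinj Hneq Hedge Hhub Hloop].
have off x : phi (inl x) \notin codom t.
  by apply/codomP => -[i]; rewrite -Ht => /(bij_inj bphi).
pose f x := if insub x is Some x' then q (phi (inl x')) else c.
have fv : f v = c by rewrite /f insubF // eqxx.
have fx (x : {x : T | x != v}) : f (val x) = q (phi (inl x)) by rewrite /f valK.
have hub_edge (x : {x : T | x != v}) : C c (f (val x)) = m v (val x).
  rewrite fx Hhub // Hn count_mem3; apply: eq_bigr => i _.
  by rewrite -Ht Hphi.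
exists f; split.
- apply: inj_card_bij => [a b|]; last first.
    by have := bij_eq_card bphi; rewrite card_Vexp -Hcard => -[->].
  case: (eqVval v a) => [->|[a' ->]]; case: (eqVval v b) => [->|[b' ->]] //.
  + by rewrite fv fx => /esym/eqP; rewrite (negbTE (Hneq _ (off _))).
  + by rewrite fv fx => /eqP; rewrite (negbTE (Hneq _ (off _))).
  + by rewrite !fx => /(Hinj _ _ (off _) (off _)) /(bij_inj bphi) [->].
- move=> a b; case: (eqVval v a) => [->|[a' ->]]; case: (eqVval v b) => [->|[b' ->]].
  + by rewrite fv Hloop Hl.
  + by rewrite fv hub_edge.
  + by rewrite fv HsC hub_edge Hs.
  + by rewrite !fx Hedge ?off // Hphi.
Qed.

Definition old_vertex (H : finType) (w : H) (a : Vexp w) : H :=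
  if a is inl y then val y else w.

Lemma notin_codom_inr (H : finType) (w : H) (a : Vexp w) :
  a \notin codom inr -> exists y, a = inl y.
Proof. by case: a => [y|i] Ha; [exists y | rewrite codom_f in Ha]. Qed.

Lemma contraction_map_expand (H : finType) (mH : mgraph H) w ys :
  mH w w = 0 -> nbrs mH w ys ->
  contraction_map (expand mH w ys) inr mH w (@old_vertex H w).
Proof.
move=> Hl Hn; split=> //.
- by rewrite card_Vexp.
- move=> x y /notin_codom_inr [x' ->] /notin_codom_inr [y' ->] /= /val_inj -> //.
- by move=> x /notin_codom_inr [x' ->]; apply: (valP x').
- by move=> x y /notin_codom_inr [x' ->] /notin_codom_inr [y' ->].
- by move=> x /notin_codom_inr [x' ->] /=; rewrite Hn count_mem3.
Qed.

Section OldTriangle.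
Variables (H : finType) (mH : mgraph H) (w : H) (ys : 3.-tuple H)
  (a : 'I_3 -> {y : H | y != w}).
Hypotheses (cubicH : cubic mH) (nbrsH : nbrs mH w ys)
  (triH : forall i j, mH (val (a i)) (val (a j)) = (i != j)).

Definition old_tri : 3.-tuple H := [tuple val (a i) | i < 3].

Lemma old_tri_triangle i j : mH (tnth old_tri i) (tnth old_tri j) = (i != j).
Proof. by rewrite !tnth_mktuple; apply: triH. Qed.

Lemma old_tri_uniq : uniq old_tri.
Proof. exact: triangle_uniq cubicH old_tri_triangle. Qed.

Lemma w_notin_old_tri : w \notin old_tri.
Proof.
apply/tnthP => -[i]; rewrite tnth_mktuple => /eqP.
by rewrite eq_sym (negbTE (valP (a i))).
Qed.

Definition old_corner i : Vexp w := inl (a i).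

Lemma inl_notin_codom (y : {y : H | y != w}) :
  inl y \notin codom old_corner -> val y \notin old_tri.
Proof.
apply: contra => /tnthP [i]; rewrite tnth_mktuple => /val_inj ->.
exact: codom_f old_corner i.
Qed.

Lemma insub_eq_old (h z : H) :
  h \notin old_tri -> (insub z == insub h :> Vcontr old_tri) = (z == h).
Proof. by move=> Hh; rewrite (insubT (fun x => x \notin old_tri) Hh) insub_eqSome. Qed.

Lemma contract_insub (h1 h2 : H) : h1 \notin old_tri -> h2 \notin old_tri ->
  contract mH old_tri (insub h1) (insub h2) = mH h1 h2.
Proof.
move=> H1 H2; rewrite (insubT (fun x => x \notin old_tri) H1).
by rewrite (insubT (fun x => x \notin old_tri) H2).
Qed.

Lemma contract_None_insub (h : H) : h \notin old_tri ->
  contract mH old_tri None (insub h) = \sum_(i < 3) mH (tnth old_tri i) h.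
Proof. by move=> Hh; rewrite (insubT (fun x => x \notin old_tri) Hh). Qed.

Definition cw : Vcontr old_tri := Some (exist _ w w_notin_old_tri).

(* [insub] sends the vertices of [old_tri] to the contracted vertex [None]. *)
Definition cys : 3.-tuple (Vcontr old_tri) := [tuple insub (tnth ys j) | j < 3].

Definition hub : {b : Vcontr old_tri | b != cw} := exist _ None isT.

(* The value of [lift w] is junk. *)
Definition lift (h : H) : {b : Vcontr old_tri | b != cw} := insubd hub (insub h).

Lemma val_lift h : h != w -> val (lift h) = insub h.
Proof. by move=> hw; rewrite val_insubd /cw insub_eqSome /= hw; case: insub. Qed.

Definition collapse (b : Vexp w) : Vexp cw :=
  match b with inl y => inl (lift (val y)) | inr j => inr j end.

Lemma contraction_map_collapse :
  contraction_map (expand mH w ys) old_corner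
    (expand (contract mH old_tri) cw cys) (inl hub) collapse.
Proof.
have lift_old (y : {y : H | y != w}) : val (lift (val y)) = insub (val y).
  exact: val_lift (valP y).
split.
- by rewrite !card_Vexp -(card_Vcontr cubicH old_tri_triangle).
- case=> [x|i] [y|j] Hx Hy //= [E]; last by rewrite E.
  move: E => /(congr1 val); rewrite !lift_old => /eqP.
  by rewrite insub_eq_old ?inl_notin_codom // => /eqP/val_inj ->.
- case=> [x|j] // /inl_notin_codom Hx; apply/eqP => -[] /(congr1 val).
  by rewrite lift_old => /eqP; rewrite insub_eqNone Hx.
- case=> [x|i] [y|j] //= Hx Hy; rewrite ?lift_old ?tnth_mktuple.
  + by rewrite contract_insub ?inl_notin_codom.
  + by rewrite eq_sym insub_eq_old ?inl_notin_codom // eq_sym.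
  + by rewrite insub_eq_old ?inl_notin_codom.
- case=> [x|j] /= Hx.
  + rewrite lift_old contract_None_insub ?inl_notin_codom //.
    by apply: eq_bigr => i _; rewrite tnth_mktuple.
  + rewrite /cys tnth_mktuple eq_sym insub_eqNone negbK.
    rewrite -(count_uniq_mem _ old_tri_uniq) count_mem3.
    by apply: eq_bigr => i _; rewrite tnth_mktuple.
- by [].
Qed.

Lemma nbrs_collapse : nbrs (contract mH old_tri) cw cys.
Proof.
have [HsH _ _] := cubicH.
move=> u; rewrite count_mem3; under eq_bigr do rewrite tnth_mktuple.
case: u => [y|]; rewrite /contract /=.
- by rewrite nbrsH count_mem3; apply: eq_bigr => j _; rewrite insub_eqSome.
- under [RHS]eq_bigr do
    rewrite insub_eqNone negbK -(count_uniq_mem _ old_tri_uniq) count_mem3.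
  rewrite [RHS]exchange_big /=; apply: eq_bigr => i _.
  by rewrite HsH nbrsH count_mem3; apply: eq_bigr => j _; rewrite eq_sym.
Qed.

End OldTriangle.

Lemma expand_simple_card2 (T : finType) (m : mgraph T) v xs :
  (forall x, m x x = 0) -> #|T| = 2 -> simpleg (expand m v xs).
Proof.
move=> Hl T2; apply: expand_simple => x y Hx Hy.
have /card_le1_eqP/(_ x y) : #|predC1 v| <= 1 by rewrite cardC1 T2.
by rewrite !inE => /(_ Hx Hy) ->; rewrite Hl.
Qed.

Section TwoExpansions.
Variables (T : finType) (m : mgraph T) (v : T) (xs : 3.-tuple T)
  (H : finType) (mH : mgraph H) (w : H) (ys : 3.-tuple H) (phi : Vexp v -> Vexp w).
Hypotheses (cubicm : cubic m) (nbrsm : nbrs m v xs)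
  (cubicH : cubic mH) (nbrsH : nbrs mH w ys) (bphi : bijective phi)
  (phi_edge : forall a b, expand mH w ys (phi a) (phi b) = expand m v xs a b).

Lemma giso_new_triangle : (forall i, exists j, phi (inr i) = inr j) -> giso m mH.
Proof.
move=> Hnew; have [HsH HlH _] := cubicH.
pose p i := if phi (inr i) is inr j then j else i.
have phi_p i : phi (inr i) = inr (p i) by rewrite /p; case: (Hnew i) => j ->.
have p_inj : injective p.
  move=> i j E; have /(bij_inj bphi) [] // : phi (inr i) = phi (inr j).
  by rewrite !phi_p E.
exact: contraction_giso cubicm nbrsm HsH bphi phi_edge phi_p
  (contraction_map_perm p_inj (contraction_map_expand (HlH w) nbrsH)).
Qed.

Variable a : 'I_3 -> {y : H | y != w}.
Hypothesis phi_old : forall i, phi (inr i) = inl (a i).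

Lemma old_triangle i j : mH (val (a i)) (val (a j)) = (i != j).
Proof. by have := phi_edge (inr i) (inr j); rewrite !phi_old. Qed.

Lemma giso_old_triangle : giso m (expand (contract mH (old_tri a)) (cw a) (cys ys a)).
Proof.
have [HsH _ _] := cubicH.
apply: contraction_giso cubicm nbrsm _ bphi phi_edge phi_old _.
  exact: expand_sym (contract_sym HsH).
exact: contraction_map_collapse cubicH old_triangle.
Qed.

Lemma card_contract_old : #|Vcontr (old_tri a)|.+2 = #|T|.
Proof.
have := bij_eq_card bphi; rewrite !card_Vexp => -[->].
exact: card_Vcontr cubicH (old_tri_triangle old_triangle).
Qed.

End TwoExpansions.

Lemma klee_expand_giso (K0 : finType) (k : mgraph K0) : klee k ->
  forall (T : finType) (m : mgraph T) v xs, cubic m -> 4 <= #|T| -> nbrs m v xs ->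
  giso (expand m v xs) k -> klee m.
Proof.
elim=> {K0 k} [K0 k Hi | K0 k H mH w ys HkH IH HnH Hi] T m v xs Hc H4 Hn Hiso.
  by have := giso_card Hiso; rewrite -(giso_card Hi) card_Vexp card_ord; lia.
have [HcH HsH] := klee_cubic_simple HkH.
have [phi [bphi Hphi]] := giso_trans Hiso (giso_sym Hi).
have p_inj : injective (fun i => phi (inr i)) by move=> i j /(bij_inj bphi) [].
have [Hnew|Hold] :=
  expand_triangle (nbrs_inj HsH HnH) p_inj (fun i j => Hphi (inr i) (inr j)).
  exact: klee_giso HkH (giso_sym (giso_new_triangle Hc Hn HcH HnH bphi Hphi Hnew)).
have [y0 _] := Hold ord0.
pose a i := if phi (inr i) is inl y then y else y0.
have phi_old i : phi (inr i) = inl (a i) by rewrite /a; case: (Hold i) => y ->.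
have Hm := giso_old_triangle Hc Hn HcH bphi Hphi phi_old.
have Hcard := card_contract_old HcH bphi Hphi phi_old.
have Hold_tri := old_triangle Hphi phi_old.
have Htri := old_tri_triangle Hold_tri.
have [k2 Hk2] := cubic_handshake Hc.
have [H6|H6] := leqP 6 #|T|.
- have klee_contract : klee (contract mH (old_tri a)).
    apply: IH (contract_cubic HcH Htri) _ (nbrs_contract HcH Htri) _; first lia.
    exact: expand_contract_giso HcH Htri.
  exact: klee_exp klee_contract (nbrs_collapse HcH HnH Hold_tri) (giso_sym Hm).
- apply: klee_K4; apply: cubic_simple_K4 Hc _ _; last by lia.
  apply: giso_simple Hm _; apply: expand_simple_card2; last by lia.
  by case: HcH => _ HlH _; apply: contract_loop.
Qed.

Theorem mainTheorem4 (T : finType) (m : mgraph T) (v : T) (xs : 3.-tuple T) :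
  cubic m -> 4 <= #|T| -> nbrs m v xs -> klee (expand m v xs) -> klee m.
Proof.
by move=> Hc H4 Hn Hk; apply: klee_expand_giso Hk T m v xs Hc H4 Hn (giso_refl _).
Qed.
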